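(* Let $l>0$, $d>0$, $V>0$, $\gamma_{\max}\in(0,\pi/2)$, and $k_1,k_2\in\mathbb{R}$. Let $\overline{\kappa}_0=\dfrac{\tan\gamma_{\max}}{\sqrt{l^2+d^2\tan^2\gamma_{\max}}}$. Suppose either (1) $k_1<0$ and $k_2>\dfrac{d}{l}\dfrac{\tan^2\gamma_{\max}}{\sqrt{l^2+d^2\tan^2\gamma_{\max}}}$, or (2) $k_1>0$ and $k_2<-\dfrac{1}{d}$. Then for every constant curvature $\kappa_0$ with $|\kappa_0|\le\overline{\kappa}_0$, the desired path-following solution ($e_{\rm D}\equiv0$, $\hat\theta_{\rm D}\equiv 0$) of the closed-loop system is stable, in the sense that, with $\lambda_1=\sqrt{1-d^2\kappa_0^2}$ and $\lambda_2=1+(l^2-d^2)\kappa_0^2$, both eigenvalues of the matrix $$\mathbf{A}=\begin{bmatrix}\dfrac{Vd}{l}\dfrac{\lambda_2}{\lambda_1}k_1k_2 & \dfrac{V}{\lambda_1}\Big(1+\dfrac{d}{l}\lambda_2k_1\Big)\\[2mm] \dfrac{V}{l}\Big(\lambda_2k_1k_2-\dfrac{l}{\lambda_1}\kappa_0^2\Big) & \dfrac{V\lambda_2}{l}k_1\end{bmatrix}$$ have strictly negative real parts.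
   Context: Path-following setting: a vehicle (kinematic bicycle model, wheels without side slip, constant longitudinal speed $V>0$, wheelbase $l$, steering angle $\gamma$) must make a point A on its longitudinal symmetry axis, at distance $d$ ahead of the rear axle center, follow a planar path. With $s_{\rm D}$ the arc length of the closest path point D, $\kappa_{\rm D}$ the path curvature at D, $e_{\rm D}$ the signed lateral deviation of A from the path and $\theta_{\rm D}$ the yaw angle error relative to the path tangent at D, the dynamics are $\dot s_{\rm D}=\frac{V}{1-e_{\rm D}\kappa_{\rm D}}(\cos\theta_{\rm D}-\frac{d}{l}\tan\gamma\sin\theta_{\rm D})$, $\dot e_{\rm D}=V(\sin\theta_{\rm D}+\frac{d}{l}\tan\gamma\cos\theta_{\rm D})$, $\dot\theta_{\rm D}=\frac{V}{l}\tan\gamma-\frac{V\kappa_{\rm D}}{1-e_{\rm D}\kappa_{\rm D}}(\cos\theta_{\rm D}-\frac{d}{l}\tan\gamma\sin\theta_{\rm D})$. The steering angle is set to $\gamma=\gamma_{\rm ff}+\gamma_{\rm fb}$ with $\gamma_{\rm ff}=\arctan\frac{l\kappa_{\rm D}}{\sqrt{1-(d\kappa_{\rm D})^2}}$ and $\gamma_{\rm fb}=g\big(k_1(\theta_{\rm D}-\theta_0+\arctan(k_2e_{\rm D}))\big)$, where $\theta_0=-\arcsin(d\kappa_{\rm D})$ and $g$ is a bounded, odd, continuously differentiable, increasing function with $g'(0)=1$ (e.g. $g(x)=\frac{2g_{\rm sat}}{\pi}\arctan(\frac{\pi}{2g_{\rm sat}}x)$). Set $\hat\theta_{\rm D}=\theta_{\rm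 D}-\theta_0$. For constant curvature $\kappa_{\rm D}\equiv\kappa_0$ the closed loop has the desired solution $e_{\rm D}\equiv0$, $\hat\theta_{\rm D}\equiv0$; the matrix $\mathbf{A}$ is the Jacobian of the closed-loop $(e_{\rm D},\hat\theta_{\rm D})$ dynamics at this solution, and stability is understood as this linearization being Hurwitz. The bound $|\kappa_0|\le\overline\kappa_0$ is the standing assumption that the curvature can be followed with steering angle at most $\gamma_{\max}$. *)

From HB Require Import structures.
From mathcomp Require Import all_boot all_order all_algebra.
From mathcomp Require Import complex.
From mathcomp Require Import all_classical all_reals all_analysis.
Set Implicit Arguments. Unset Strict Implicit. Unset Printing Implicit Defensive.
Import Order.TTheory GRing.Theory Num.Theory.
Local Open Scope ring_scope.

Definition kappa_bar {R : realType} (l d gmax : R) : R :=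
  tan gmax / Num.sqrt (l ^+ 2 + d ^+ 2 * tan gmax ^+ 2).

Definition lambda1 {R : realType} (d k0 : R) : R := Num.sqrt (1 - d ^+ 2 * k0 ^+ 2).
Definition lambda2 {R : realType} (l d k0 : R) : R := 1 + (l ^+ 2 - d ^+ 2) * k0 ^+ 2.

(* The Jacobian A of the closed loop (e_D, hat theta_D) dynamics. *)
Definition Amat {R : realType} (l d V k1 k2 k0 : R) : 'M[R]_2 :=
  let la1 := lambda1 d k0 in
  let la2 := lambda2 l d k0 in
  \matrix_(i < 2, j < 2)
    if (i == 0) && (j == 0) then V * d / l * (la2 / la1) * k1 * k2
    else if (i == 0) then V / la1 * (1 + d / l * la2 * k1)
    else if (j == 0) then V / l * (la2 * k1 * k2 - l / la1 * k0 ^+ 2)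
    else V * la2 / l * k1.

Definition hurwitz {R : realType} (A : 'M[R]_2) : Prop :=
  forall z : R[i], eigenvalue (map_mx (real_complex R) A) z -> complex.Re z < 0.

(* The eigenvalues of a real 2x2 matrix are the roots of z^2 - tr z + det, so
   tr < 0 and det > 0 force both real parts to be negative.  The bound
   |k0| <= kappa_bar says that the feedforward steering angle stays below gmax,
   i.e. l |k0| <= tan gmax * la1, and it forces d^2 k0^2 < 1, whence
   0 < la1 <= 1 and la2 > 0.  For k1 > 0 and d k2 < -1 <= -la1 the signs of the
   factored trace and determinant are then immediate; for k1 < 0 the lower bound
   on k2 yields d k0^2 < k2 la1, which makes d k2 + la1 > 0 and the determinant
   positive. *)

From HB Require Import structures.
From mathcomp Require Import all_boot all_order all_algebra.
From mathcomp Require Import complex.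
From mathcomp Require Import all_classical all_reals all_analysis.
From mathcomp Require Import ring lra.
Import Order.TTheory GRing.Theory Num.Theory.
Local Open Scope ring_scope.

Lemma mxtrace2 (R : pzSemiRingType) (A : 'M[R]_2) : \tr A = A 0 0 + A 1 1.
Proof.
rewrite /mxtrace !big_ord_recl big_ord0 addr0.
by congr (A _ _ + A _ _); apply: val_inj.
Qed.

Lemma det_mx22 (R : comPzRingType) (A : 'M[R]_2) :
  \det A = A 0 0 * A 1 1 - A 0 1 * A 1 0.
Proof.
rewrite (expand_det_row _ 0) !big_ord_recl big_ord0 addr0 /cofactor !det_mx11 !mxE /=.
rewrite expr0 expr1 !mul1r mulN1r mulrN.
by congr (A _ _ * A _ _ - A _ _ * A _ _); apply: val_inj.
Qed.

Lemma char_poly2 (R : comNzRingType) (A : 'M[R]_2) :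
  char_poly A = 'X^2 - (\tr A)%:P * 'X + (\det A)%:P.
Proof.
apply/polyP => -[|[|[|i]]]; rewrite !(coefD, coefN, coefXn, coefMX, coefC) /= ?subr0.
- by rewrite char_poly_det expr2 mulrNN !mul1r add0r.
- by rewrite (char_poly_trace A) // add0r addr0.
- by rewrite addr0 -(monicP (char_poly_monic A)) /lead_coef size_char_poly.
- by rewrite addr0 nth_default ?size_char_poly.
Qed.

Lemma Re_lt0_root_quadratic (R : rcfType) (T D : R) (z : R[i]) :
  T < 0 -> 0 < D -> z ^+ 2 - T%:C%C * z + D%:C%C = 0 -> complex.Re z < 0.
Proof.
move=> T_lt0 D_gt0; case: z => x y /eqP.
rewrite eq_complex /= => /andP[/eqP re_eq /eqP im_eq].
have [y0|y_neq0] := eqVneq y 0.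
  by move: re_eq; rewrite y0 !mulr0 ?mul0r !subr0; nra.
have : y * (2 * x - T) = 0 by rewrite -im_eq; ring.
by move/eqP; rewrite mulf_eq0 (negbTE y_neq0) subr_eq0 => /eqP; lra.
Qed.

Lemma hurwitz_tr_det (R : realType) (A : 'M[R]_2) :
  \tr A < 0 -> 0 < \det A -> hurwitz A.
Proof.
move=> tr_lt0 det_gt0 z; rewrite eigenvalue_root_char char_poly2 => /rootP.
have -> : \tr (map_mx (real_complex R) A) = (\tr A)%:C%C.
  by rewrite !mxtrace2 !mxE; apply/eqP; rewrite eq_complex /= addr0 !eqxx.
have -> : \det (map_mx (real_complex R) A) = (\det A)%:C%C by exact: det_map_mx.
rewrite !hornerE; exact: Re_lt0_root_quadratic.
Qed.

Section ClosedLoopJacobian.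

Context {R : realType} {l d V k1 k2 k0 : R}.
Hypotheses (l_gt0 : 0 < l) (d_gt0 : 0 < d) (V_gt0 : 0 < V).
Hypothesis dk0_lt1 : d ^+ 2 * k0 ^+ 2 < 1.

Local Notation la1 := (lambda1 d k0).
Local Notation la2 := (lambda2 l d k0).
Local Notation A := (Amat l d V k1 k2 k0).

Lemma lambda1_gt0 : 0 < la1.
Proof. by rewrite sqrtr_gt0 subr_gt0. Qed.

Lemma lambda1_le1 : la1 <= 1.
Proof.
have la1_sq : la1 ^+ 2 = 1 - d ^+ 2 * k0 ^+ 2 by rewrite sqr_sqrtr // subr_ge0 ltW.
have := lambda1_gt0; nra.
Qed.

Lemma lambda2_gt0 : 0 < la2.
Proof. by move: dk0_lt1 (mulr_ge0 (sqr_ge0 l) (sqr_ge0 k0)); rewrite /lambda2; lra. Qed.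

Lemma mxtrace_Amat : \tr A = V * la2 * k1 * (d * k2 + la1) / (l * la1).
Proof.
rewrite mxtrace2 !mxE /=; field.
by rewrite !gt_eqF ?lambda1_gt0.
Qed.

Lemma det_Amat :
  \det A = V ^+ 2 / (l * la1 ^+ 2) * (k0 ^+ 2 * (l + d * la2 * k1) - la1 * la2 * k1 * k2).
Proof.
rewrite det_mx22 !mxE /=; field.
by rewrite !gt_eqF ?lambda1_gt0.
Qed.

Lemma Amat_hurwitz_neg_gain : k1 < 0 -> d * k0 ^+ 2 < k2 * la1 -> hurwitz A.
Proof.
move=> k1_lt0 k2_large.
have la1_gt0 := lambda1_gt0; have la2_gt0 := lambda2_gt0.
have dk0_ge0 : 0 <= d * k0 ^+ 2 := mulr_ge0 (ltW d_gt0) (sqr_ge0 k0).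
have k2_gt0 : 0 < k2 by rewrite -(pmulr_lgt0 _ la1_gt0) (le_lt_trans dk0_ge0).
apply: hurwitz_tr_det.
- rewrite mxtrace_Amat ltr_pdivrMr ?mulr_gt0 // mul0r.
  rewrite pmulr_llt0 ?ltr_wpDl ?mulr_ge0 ?ltW //.
  by rewrite pmulr_rlt0 ?mulr_gt0.
- rewrite det_Amat mulr_gt0 ?divr_gt0 ?mulr_gt0 ?exprn_gt0 //.
  have : 0 <= l * k0 ^+ 2 := mulr_ge0 (ltW l_gt0) (sqr_ge0 k0).
  have : 0 < la2 * - k1 * (k2 * la1 - d * k0 ^+ 2).
    by rewrite !mulr_gt0 ?oppr_gt0 ?subr_gt0.
  lra.
Qed.

Lemma Amat_hurwitz_pos_gain : 0 < k1 -> d * k2 < -1 -> hurwitz A.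
Proof.
move=> k1_gt0 dk2_lt.
have la1_gt0 := lambda1_gt0; have la1_le1 := lambda1_le1; have la2_gt0 := lambda2_gt0.
have k2_lt0 : k2 < 0 by rewrite -(pmulr_rlt0 _ d_gt0) (lt_trans dk2_lt) ?ltrN10.
apply: hurwitz_tr_det.
- rewrite mxtrace_Amat ltr_pdivrMr ?mulr_gt0 // mul0r.
  rewrite nmulr_llt0; last by lra.
  by rewrite !mulr_gt0.
- rewrite det_Amat mulr_gt0 ?divr_gt0 ?mulr_gt0 ?exprn_gt0 //.
  have : 0 <= k0 ^+ 2 * (l + d * la2 * k1).
    by rewrite mulr_ge0 ?sqr_ge0 // addr_ge0 ?ltW ?mulr_gt0.
  have : 0 < la1 * la2 * k1 * - k2 by rewrite !mulr_gt0 ?oppr_gt0.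
  lra.
Qed.

End ClosedLoopJacobian.

Section CurvatureBound.

Context {R : realType} {l d g k0 : R}.
Hypotheses (l_gt0 : 0 < l) (d_gt0 : 0 < d) (k0_le : `|k0| <= kappa_bar l d g).

Lemma kappa_bar_steering : d ^+ 2 * k0 ^+ 2 < 1 /\ l * `|k0| <= tan g * lambda1 d k0.
Proof.
have := k0_le; rewrite /kappa_bar /lambda1.
set t := tan g; clearbody t; set W := _ + _.
have W_gt0 : 0 < W by rewrite /W ltr_wpDr ?exprn_gt0 // mulr_ge0 ?sqr_ge0.
have S_gt0 : 0 < Num.sqrt W by rewrite sqrtr_gt0.
have S_sq : Num.sqrt W ^+ 2 = W by rewrite sqr_sqrtr ?ltW.
have k0_sq : `|k0| ^+ 2 = k0 ^+ 2 by rewrite real_normK ?num_real.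
rewrite ler_pdivlMr // => k0S_le.
have k0S_ge0 : 0 <= `|k0| * Num.sqrt W := mulr_ge0 (normr_ge0 _) (ltW S_gt0).
have k0W_le : k0 ^+ 2 * W <= t ^+ 2 by rewrite -k0_sq -S_sq -exprMn; nra.
have dk0_lt1 : d ^+ 2 * k0 ^+ 2 < 1.
  have dk0W_le : d ^+ 2 * (k0 ^+ 2 * W) <= d ^+ 2 * t ^+ 2.
    by rewrite ler_wpM2l ?sqr_ge0.
  have l2_gt0 := exprn_gt0 2 l_gt0.
  by rewrite -(ltr_pM2r W_gt0) mul1r; move: dk0W_le; rewrite /W; lra.
split=> //.
have m_sq : Num.sqrt (1 - d ^+ 2 * k0 ^+ 2) ^+ 2 = 1 - d ^+ 2 * k0 ^+ 2.
  by rewrite sqr_sqrtr // subr_ge0 ltW.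
have : (l * `|k0|) ^+ 2 <= (t * Num.sqrt (1 - d ^+ 2 * k0 ^+ 2)) ^+ 2.
  by rewrite !exprMn k0_sq m_sq; move: k0W_le; rewrite /W; lra.
have : 0 <= t * Num.sqrt (1 - d ^+ 2 * k0 ^+ 2).
  by rewrite mulr_ge0 ?sqrtr_ge0 // (le_trans k0S_ge0).
have : 0 <= l * `|k0| := mulr_ge0 (ltW l_gt0) (normr_ge0 k0).
nra.
Qed.

Lemma kappa_bar_gain_bound (k2 : R) :
  d / l * (tan g ^+ 2 / Num.sqrt (l ^+ 2 + d ^+ 2 * tan g ^+ 2)) < k2 ->
  d * k0 ^+ 2 < k2 * lambda1 d k0.
Proof.
(* d k0^2 = (d/l) (l |k0|) |k0| <= (d/l) (t la1) (t/S) = la1 (d/l) (t^2/S) < la1 k2 *)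
have [dk0_lt1 steer] := kappa_bar_steering.
have la1_gt0 := lambda1_gt0 dk0_lt1.
move: k0_le steer; rewrite /kappa_bar.
set t := tan g; set S := Num.sqrt _; set la1 := lambda1 d k0 => k0S_le steer k2_gt.
rewrite [k2 * _]mulrC (@le_lt_trans _ _ (la1 * (d / l * (t ^+ 2 / S)))) ?ltr_pM2l //.
have -> : d * k0 ^+ 2 = d / l * (l * `|k0|) * `|k0|.
  by rewrite -[k0 ^+ 2]real_normK ?num_real //; field; rewrite gt_eqF.
have -> : la1 * (d / l * (t ^+ 2 / S)) = d / l * (t * la1) * (t / S) by ring.
have dl_gt0 : 0 < d / l by rewrite divr_gt0.
apply: ler_pM => //.
- exact: mulr_ge0 (ltW dl_gt0) (mulr_ge0 (ltW l_gt0) (normr_ge0 k0)).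
- by rewrite ler_pM2l.
Qed.

End CurvatureBound.

Theorem proposition1 (R : realType) (l d V gmax k1 k2 : R) :
  0 < l -> 0 < d -> 0 < V -> 0 < gmax -> gmax < pi / 2 ->
  ((k1 < 0 /\ k2 > d / l * (tan gmax ^+ 2 / Num.sqrt (l ^+ 2 + d ^+ 2 * tan gmax ^+ 2)))
   \/ (0 < k1 /\ k2 < - d^-1)) ->
  forall k0 : R, `|k0| <= kappa_bar l d gmax ->
    hurwitz (Amat l d V k1 k2 k0).
Proof.
move=> l_gt0 d_gt0 V_gt0 _ _ gains k0 k0_le.
have [dk0_lt1 _] := kappa_bar_steering l_gt0 k0_le.
case: gains => [[k1_lt0 k2_gt] | [k1_gt0 k2_lt]].
- apply: Amat_hurwitz_neg_gain => //.
  exact: kappa_bar_gain_bound l_gt0 d_gt0 k0_le k2 k2_gt.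
- apply: Amat_hurwitz_pos_gain => //.
  by rewrite -(mulfV (lt0r_neq0 d_gt0)) -mulrN ltr_pM2l.
Qed.
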